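(* Let $G\leq\operatorname{Homeo}(\mathfrak{C})$ be a vigorous group generated by its elements of small support. Suppose $B,C,D\in K_{\mathfrak{C}}$ are pairwise disjoint and $B\cup C\cup D=\mathfrak{C}$. Then $G=\langle \operatorname{pstab}_G(C)\cup\operatorname{pstab}_G(D)\rangle$.
   Context: $\mathfrak{C}$ denotes a Cantor space (a space homeomorphic to $\{0,1\}^\omega$). Groups of homeomorphisms act on the right. $K_{\mathfrak{C}}$ denotes the set of non-empty proper clopen subsets of $\mathfrak{C}$. For $\gamma\in\operatorname{Homeo}(\mathfrak{C})$, $\operatorname{supp}(\gamma)=\{p\in\mathfrak{C}: p\gamma\neq p\}$. For $G\le\operatorname{Homeo}(\mathfrak{C})$ and $A\subseteq\mathfrak{C}$, $\operatorname{pstab}_G(A)=\{g\in G: pg=p \text{ for all } p\in A\}$. A subset $S\subseteq \operatorname{Homeo}(\mathfrak{C})$ is vigorous if for all clopen $A,B,C\subseteq\mathfrak{C}$ with $B,C$ non-empty proper subsets of $A$ there is $\gamma\in S$ with $\operatorname{supp}(\gamma)\subseteq A$ and $B\gamma\subseteq C$. $G$ is generated by its elements of small support if $G$ is generated by $\{\gamma\in G: \operatorname{supp}(\gamma)\subseteq A \text{ for some } A\in K_{\mathfrak{C}}\}$. *)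

From HB Require Import structures.
From mathcomp Require Import all_boot all_order all_algebra.
From mathcomp Require Import all_classical all_reals topology cantor.
Set Implicit Arguments. Unset Strict Implicit. Unset Printing Implicit Defensive.
Local Open Scope classical_set_scope.

(* The Cantor space C is modelled by MathComp-Analysis' [cantor_space]
   (bool^nat with the product topology). Points act on the right: p g = g p. *)
Notation CS := cantor_space.

Definition clopen_set (A : set CS) : Prop := open A /\ closed A.

Definition K_C (A : set CS) : Prop := clopen_set A /\ A !=set0 /\ A <> setT.

Definition is_homeo (f : CS -> CS) : Prop :=
  continuous f /\ exists g : CS -> CS,
    continuous g /\ cancel f g /\ cancel g f.

Definition supp (g : CS -> CS) : set CS := [set p | g p <> p].

Definition is_subgroup (H : set (CS -> CS)) : Prop :=
  [/\ (forall f, H f -> is_homeo f),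
      H id,
      (forall f g, H f -> H g -> H (g \o f)) &
      (forall f, H f -> exists2 g, H g & cancel f g /\ cancel g f)].

Definition generated (S : set (CS -> CS)) : set (CS -> CS) :=
  [set f | forall H, is_subgroup H -> S `<=` H -> H f].

Definition pstab (G : set (CS -> CS)) (A : set CS) : set (CS -> CS) :=
  [set g | G g /\ forall p, A p -> g p = p].

Definition vigorous (S : set (CS -> CS)) : Prop :=
  forall A B C : set CS, clopen_set A -> clopen_set B -> clopen_set C ->
    B !=set0 -> B `<=` A -> B <> A ->
    C !=set0 -> C `<=` A -> C <> A ->
    exists2 g, S g & supp g `<=` A /\ g @` B `<=` C.

Definition gen_small_support (G : set (CS -> CS)) : Prop :=
  G = generated [set g | G g /\ exists A, K_C A /\ supp g `<=` A].

From mathcomp Require Import all_boot all_order all_algebra.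
From mathcomp Require Import all_classical all_reals topology cantor.
Set Implicit Arguments. Unset Strict Implicit. Unset Printing Implicit Defensive.
Local Open Scope classical_set_scope.

(* For the other one let K be any subgroup
   containing pstab_G(C) and pstab_G(D); as G is generated by elements of
   small support, it suffices to show that every g in G supported in a proper
   clopen set A lies in K.
   Elements of G supported in B u C (resp. B u D) fix D (resp. C) pointwise,
   hence lie in K.  Using vigour inside such unions we build k in K n G with
   k(C) disjoint from A: first push C into B, then push B into the complement
   of A, inside whichever of B, C, D meets that complement.  The conjugate
   k^-1 g k then fixes C pointwise, so it lies in K, and so does
   g = k (k^-1 g k) k^-1.
   The file first collects elementary facts on supports, inverses and
   vigour, then carries out this argument in a section, and finally derives
   the theorem. *)

(* A subset of X is never all of X u Y when Y is non-empty and disjoint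
   from X; this gives the properness conditions required by vigour. *)
Lemma sub_neq_disjoint_union (X Y Z : set cantor_space) :
  Z `<=` X -> Y !=set0 -> X `&` Y = set0 -> Z <> X `|` Y.
Proof.
move=> ZX [y Yy] XY ZXY.
have /ZX Xy : Z y by rewrite ZXY; right.
have XYy : (X `&` Y) y by [].
by move: XYy; rewrite XY.
Qed.

Lemma supp_disjoint_pstab (G : set (cantor_space -> cantor_space))
    (X Y : set cantor_space) f :
  G f -> supp f `<=` X -> X `&` Y = set0 -> pstab G Y f.
Proof.
move=> Gf sfX XY; split => // p Yp; apply: contrapT => fp.
have XYp : (X `&` Y) p by split => //; apply: sfX.
by move: XYp; rewrite XY.
Qed.

(* The inverse of an element of a subgroup lies in that subgroup, whichever
   two-sided inverse is chosen (two-sided inverses are unique). *)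
Lemma subgroup_inv (H : set (cantor_space -> cantor_space)) k ki :
  is_subgroup H -> H k -> cancel k ki -> cancel ki k -> H ki.
Proof.
move=> [_ _ _ HV] Hk kK Kk; have [h Hh [kh hk]] := HV _ Hk.
suff -> : ki = h by [].
by apply: funext => x; rewrite -{2}(Kk x) kh.
Qed.

Lemma vigorous_pair (G : set (cantor_space -> cantor_space))
    (X Y T : set cantor_space) :
  vigorous G -> clopen_set X -> clopen_set Y -> X `&` Y = set0 ->
  X !=set0 -> Y !=set0 -> clopen_set T -> T !=set0 -> T `<=` X \/ T `<=` Y ->
  exists2 g, G g & supp g `<=` X `|` Y /\ g @` X `<=` T.
Proof.
move=> vG cX cY XY nX nY cT nT TXY.
have YX : Y `&` X = set0 by rewrite setIC.
apply: vG => //; first exact: clopenU.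
- exact: sub_neq_disjoint_union.
- by case: TXY => TZ p /TZ; [left | right].
- case: TXY => TZ; first exact: sub_neq_disjoint_union.
  by rewrite setUC; apply: sub_neq_disjoint_union.
Qed.

Section ConjugationIntoStabiliser.

Variable G K : set (cantor_space -> cantor_space).
Variable B C D : set cantor_space.
Hypothesis subgroupG : is_subgroup G.
Hypothesis vigorousG : vigorous G.
Hypothesis subgroupK : is_subgroup K.
Hypothesis pstabK : pstab G C `|` pstab G D `<=` K.
Hypotheses (KB : K_C B) (KC : K_C C) (KD : K_C D).
Hypotheses (BC : B `&` C = set0) (BD : B `&` D = set0) (CD : C `&` D = set0).
Hypothesis BCD : B `|` C `|` D = setT.

Let clopen_B : clopen_set B. Proof. by case: KB. Qed.
Let clopen_C : clopen_set C. Proof. by case: KC. Qed.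
Let clopen_D : clopen_set D. Proof. by case: KD. Qed.
Let nonempty_B : B !=set0. Proof. by case: KB => _ []. Qed.
Let nonempty_C : C !=set0. Proof. by case: KC => _ []. Qed.
Let nonempty_D : D !=set0. Proof. by case: KD => _ []. Qed.

Lemma supp_BC_in_K g : G g -> supp g `<=` B `|` C -> K g.
Proof.
move=> Gg sg; apply: pstabK; right; apply: (supp_disjoint_pstab Gg sg).
by rewrite setIUl BD CD setU0.
Qed.

Lemma supp_BD_in_K g : G g -> supp g `<=` B `|` D -> K g.
Proof.
move=> Gg sg; apply: pstabK; left; apply: (supp_disjoint_pstab Gg sg).
by rewrite setIUl BC setIC CD setU0.
Qed.

Lemma move_B_off (A : set cantor_space) : clopen_set A -> A <> setT ->
  exists2 k, K k /\ G k & k @` B `<=` ~` A.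
Proof.
move=> cA nA; have [p nAp] : exists p, ~ A p by apply/setTPn/eqP.
have cnA : clopen_set (~` A) := clopenC set0 cA.
(* B is pushed into the complement of A inside B u Y, for Y the piece
   (C or D) such that B or Y meets that complement at p. *)
have push_B : forall Y Z, clopen_set Y -> Y !=set0 -> B `&` Y = set0 ->
    Z = B \/ Z = Y -> Z p ->
    exists2 k, G k & supp k `<=` B `|` Y /\ k @` B `<=` ~` A.
  move=> Y Z cY nY BY ZBY Zp.
  have cZ : clopen_set Z by case: ZBY => ->.
  have TBY : ~` A `&` Z `<=` B \/ ~` A `&` Z `<=` Y.
    by case: ZBY => ->; [left | right]; apply: subIsetr.
  have [k Gk [sk kB]] := vigorous_pair (T := ~` A `&` Z) vigorousG
    clopen_B cY BY nonempty_B nY (clopenI cnA cZ) (ex_intro _ p (conj nAp Zp)) TBY.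
  by exists k => //; split; last exact: subset_trans kB (@subIsetl _ _ _).
have [k Gk [skBC kB]] :
    exists2 k, G k & (supp k `<=` B `|` C \/ supp k `<=` B `|` D) /\
                     k @` B `<=` ~` A.
  have : (B `|` C `|` D) p by rewrite BCD.
  case=> [[Bp|Cp]|Dp].
  - have [k ? [? ?]] := push_B C B clopen_C nonempty_C BC (or_introl erefl) Bp.
    by exists k => //; split; first left.
  - have [k ? [? ?]] := push_B C C clopen_C nonempty_C BC (or_intror erefl) Cp.
    by exists k => //; split; first left.
  - have [k ? [? ?]] := push_B D D clopen_D nonempty_D BD (or_intror erefl) Dp.
    by exists k => //; split; first right.
exists k => //; split => //.
by case: skBC; [apply: supp_BC_in_K | apply: supp_BD_in_K].
Qed.

(* C can be moved off any proper clopen set A by an element of K n G: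
   first push C into B, then B off A. *)
Lemma move_C_off (A : set cantor_space) : clopen_set A -> A <> setT ->
  exists2 k, K k /\ G k & k @` C `<=` ~` A.
Proof.
move=> cA nA; have CB : C `&` B = set0 by rewrite setIC.
have [k1 Gk1 [sk1 k1C]] := vigorous_pair vigorousG clopen_C clopen_B CB
  nonempty_C nonempty_B clopen_B nonempty_B (or_intror (@subset_refl _ B)).
have Kk1 : K k1 by apply: supp_BC_in_K Gk1 _; rewrite setUC.
have [k2 [Kk2 Gk2] k2B] := move_B_off cA nA.
have [_ _ KM _] := subgroupK; have [_ _ GM _] := subgroupG.
exists (k2 \o k1); first by split; [apply: (KM) | apply: (GM)].
by move=> _ [p Cp <-]; apply: k2B; exists (k1 p) => //; apply: k1C; exists p.
Qed.

Lemma small_support_in_K g (A : set cantor_space) :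
  G g -> K_C A -> supp g `<=` A -> K g.
Proof.
move=> Gg [cA [_ nA]] sgA.
have [k [Kk Gk] kC] := move_C_off cA nA.
have [_ _ KM _] := subgroupK; have [_ _ GM GV] := subgroupG.
have [ki Gki [k_ki ki_k]] := GV _ Gk.
have Kki : K ki by apply: subgroup_inv Kk k_ki ki_k.
have conj_fixes_C : pstab G C (ki \o g \o k).
  split; first by apply: (GM) => //; apply: (GM).
  move=> p Cp /=; suff -> : g (k p) = k p by rewrite k_ki.
  by apply: contrapT => gkp; apply: (kC (k p)); [exists p | apply: sgA].
have -> : g = k \o (ki \o g \o k) \o ki by apply: funext => x; rewrite /= !ki_k.
by apply: (KM) => //; apply: (KM) => //; apply: pstabK; left.
Qed.

End ConjugationIntoStabiliser.

Theorem lemma2p8 (G : set (cantor_space -> cantor_space))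
  (B C D : set cantor_space) :
  is_subgroup G -> vigorous G -> gen_small_support G ->
  K_C B -> K_C C -> K_C D ->
  B `&` C = set0 -> B `&` D = set0 -> C `&` D = set0 ->
  B `|` C `|` D = setT ->
  G = generated (pstab G C `|` pstab G D).
Proof.
move=> subgroupG vigorousG smallG KB KC KD BC BD CD BCD.
apply/seteqP; split.
- move=> f Gf K subgroupK pstabK; move: Gf; rewrite {1}smallG => genf.
  apply: genf => // g [Gg [A [KA sgA]]].
  exact: (small_support_in_K subgroupG vigorousG subgroupK pstabK
    KB KC KD BC BD CD BCD Gg KA sgA).
- by move=> f genf; apply: genf => // h [[]|[]].
Qed.
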